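(* Let $F$ be an unsatisfiable CNF formula not containing the variables $x$ and $y$, and let $f^x_y(F) = \{x,\ \neg x \vee y\} \cup \{\neg y \vee \delta \mid \delta \in F\}$. Then every minimum-size regular resolution proof of $f^x_y(F)$ contains exactly one resolution step on $x$, and this step can be pushed to the leaf level, i.e., the proof can be transformed, without changing its size, into a regular resolution proof of $f^x_y(F)$ in which the resolution on $x$ is the resolution of the two leaf clauses $x$ and $\neg x \vee y$.
   Context: The resolution rule derives from clauses $\alpha \vee z$ and $\beta \vee \neg z$ the resolvent $\alpha \vee \beta$ (resolving on $z$). A resolution proof of a CNF formula $F$ is a directed acyclic graph whose nodes are clauses, whose leaves are clauses of $F$, in which each internal node is the resolvent of its two parents, and whose root is the empty clause. It is regular if no path from the root to a leaf contains two resolution steps on the same variable. The size of a proof is its number of clauses (nodes); an optimal proof is one of minimum size. *)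

From HB Require Import structures.
From mathcomp Require Import all_boot all_order finmap.
Set Implicit Arguments. Unset Strict Implicit. Unset Printing Implicit Defensive.
Local Open Scope fset_scope.

(* A literal is a pair (variable, polarity): (v, true) = v, (v, false) = ~v. *)
Definition lit := (nat * bool)%type.
Definition clause := {fset lit}.
Definition cnf := seq clause.

Definition sat_clause (a : nat -> bool) (c : clause) : bool :=
  [exists l : c, a (val l).1 == (val l).2].
Definition satisfiable (F : cnf) : Prop :=
  exists a : nat -> bool, all (sat_clause a) F.
Definition unsatisfiable (F : cnf) : Prop := ~ satisfiable F.

Definition mentions (F : cnf) (v : nat) : bool :=
  has (fun c : clause => [exists l : c, (val l).1 == v]) F.

Definition fxy (x y : nat) (F : cnf) : cnf :=
  [fset (x, true)] :: [fset (x, false); (y, true)]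
    :: [seq (y, false) |` d | d <- F].

(* A resolution proof is a DAG given in topological order: a list of nodes,
   each labelled by a clause and either a leaf (Leaf) or a resolution step
   Resolve i j z whose parents are the earlier nodes i and j, where node i
   contains z and node j contains ~z. *)
Inductive step := Leaf | Resolve of nat & nat & nat.
Record node := Node { ncl : clause; nstep : step }.
Definition dnode : node := Node fset0 Leaf.

Definition proof := seq node.

Definition cl_at (P : proof) (k : nat) : clause := ncl (nth dnode P k).
Definition step_at (P : proof) (k : nat) : step := nstep (nth dnode P k).

Definition node_ok (F : cnf) (P : proof) (k : nat) : Prop :=
  match step_at P k with
  | Leaf => cl_at P k \in F
  | Resolve i j z =>
      [/\ i < k, j < k, i != j,
          ((z, true) \in cl_at P i /\ (z, false) \in cl_at P j) &
          cl_at P k = (cl_at P i `\ (z, true)) `|` (cl_at P j `\ (z, false))]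
  end.

Definition root (P : proof) : nat := (size P).-1.

Definition is_proof (F : cnf) (P : proof) : Prop :=
  [/\ 0 < size P, (forall k, k < size P -> node_ok F P k) &
      cl_at P (root P) = fset0].

Definition parent (P : proof) : rel nat := fun k m =>
  if step_at P k is Resolve i j _ then (m == i) || (m == j) else false.

Definition is_leaf (P : proof) (k : nat) : bool :=
  if step_at P k is Leaf then true else false.

Definition pivot (P : proof) (k : nat) : option nat :=
  if step_at P k is Resolve _ _ z then Some z else None.

Definition path_pivots (P : proof) (q : seq nat) : seq nat :=
  pmap (pivot P) q.

Definition regular (P : proof) : Prop :=
  forall p : seq nat, path (parent P) (root P) p ->
    is_leaf P (last (root P) p) -> uniq (path_pivots P (root P :: p)).

Definition is_reg_proof (F : cnf) (P : proof) : Prop := is_proof F P /\ regular P.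

Definition is_min_reg_proof (F : cnf) (P : proof) : Prop :=
  is_reg_proof F P /\ forall Q, is_reg_proof F Q -> size P <= size Q.

Definition nres_on (P : proof) (v : nat) : nat :=
  count (fun k => pivot P k == Some v) (iota 0 (size P)).

(* Setting x := 1 and y := 1 in a regular proof P of f^x_y(F) yields a regular proof R of F
   with no resolution on x or y: leaves containing x or y are satisfied and disappear, a
   resolution on x or y collapses onto its parent containing ~x or ~y, and a resolution
   whose surviving parent already lacks the pivot literal collapses onto that parent.
   Each leaf path of R lifts to one of P whose pivots include its own, so R is regular.
   Every node of P that vanishes shrinks R: the n_x resolutions on x, the n_y resolutions
   on y, and at least two leaves, one containing x and one containing y (no clause of
   f^x_y(F) contains both).  So |R| <= |P| - n_x - n_y - 2.
   Conversely, resolving x with ~x \/ y into y, weakening every clause of R by ~y and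
   resolving the weakened root ~y with y gives a regular proof of f^x_y(F) of size
   |R| + 4 whose only resolution on x is on the two leaves.  Minimality of P gives
   |P| <= |R| + 4 <= |P| - n_x - n_y + 2, and n_x, n_y >= 1 because the root is empty,
   so n_x = 1 and the lifted proof has size |P|. *)

From Pilot Require Import Defs.
From mathcomp Require Import all_boot all_order finmap zify.
Set Implicit Arguments. Unset Strict Implicit. Unset Printing Implicit Defensive.
Local Open Scope fset_scope.
Local Open Scope nat_scope.

Definition nodes_ok (G : cnf) (P : proof) : Prop :=
  forall k, k < size P -> node_ok G P k.

Definition regular_at (P : proof) (k : nat) : Prop :=
  forall p, path (parent P) k p -> is_leaf P (last k p) ->
    uniq (path_pivots P (k :: p)).

Definition avoids_pivots (P : proof) (vs : seq nat) : Prop :=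
  forall k i j z, step_at P k = Resolve i j z -> z \notin vs.

Lemma pivot_avoids (P : proof) vs a v :
  avoids_pivots P vs -> pivot P a = Some v -> v \notin vs.
Proof.
by move=> av; rewrite /pivot; case E: (step_at P a) => // [i j z] [<-]; apply: av E.
Qed.

Lemma resolvent_l (Ck Ci Cj : clause) z l :
  Ck = (Ci `\ (z, true)) `|` (Cj `\ (z, false)) ->
  l \in Ci -> l != (z, true) -> l \in Ck.
Proof. by move=> -> li lz; rewrite in_fsetU in_fsetD1 li lz. Qed.

Lemma resolvent_r (Ck Ci Cj : clause) z l :
  Ck = (Ci `\ (z, true)) `|` (Cj `\ (z, false)) ->
  l \in Cj -> l != (z, false) -> l \in Ck.
Proof. by move=> -> lj lz; rewrite in_fsetU !in_fsetD1 lj lz orbT. Qed.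

Lemma path_pivots_cons (P : proof) k p :
  path_pivots P (k :: p) =
  if pivot P k is Some z then z :: path_pivots P p else path_pivots P p.
Proof. by rewrite /path_pivots /=; case: (pivot P k). Qed.

Lemma nres_on_gt0 (P : proof) v k : k < size P -> pivot P k = Some v ->
  0 < nres_on P v.
Proof.
by move=> kP pk; rewrite /nres_on -has_count; apply/hasP; exists k; rewrite ?mem_iota ?pk.
Qed.

Lemma mentionsP (F : cnf) v b (d : clause) : d \in F -> (v, b) \in d -> mentions F v.
Proof. by move=> dF vd; apply/hasP; exists d => //; apply/existsP; exists [` vd]. Qed.

Lemma pivot_onP (P : proof) v :
  (forall k, k < size P -> pivot P k != Some v) \/ exists2 k, k < size P & pivot P k = Some v.
Proof.
have [/hasP[k]|/hasPn nov] := boolP (has (fun k => pivot P k == Some v) (iota 0 (size P))).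
  by rewrite mem_iota => /andP[_ kP] /eqP; right; exists k.
by left=> k kP; apply: nov; rewrite mem_iota.
Qed.

Lemma root_succ (P : proof) : 0 < size P -> (Defs.root P).+1 = size P.
Proof. exact: prednK. Qed.

Lemma root_lt_size G P : is_proof G P -> Defs.root P < size P.
Proof. by case=> Pn _ _; rewrite /Defs.root ltn_predL. Qed.

Section LeafOrigin.
Variables (G : cnf) (P : proof).
Hypothesis P_ok : nodes_ok G P.

Lemma leaf_with_lit k l : k < size P -> l \in cl_at P k ->
  exists m, [/\ m < size P, step_at P m = Leaf & l \in cl_at P m].
Proof.
elim/ltn_ind: k => k IH kP lk.
have := P_ok kP; rewrite /node_ok.
case E: (step_at P k) => [|i j z]; first by move=> _; exists k.
case=> ik jk _ _ Ck; move: lk.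
rewrite Ck in_fsetU !in_fsetD1 => /orP[/andP[_ li]|/andP[_ lj]].
- exact: IH ik (ltn_trans ik kP) li.
- exact: IH jk (ltn_trans jk kP) lj.
Qed.

Lemma leaf_with_pivot k v : k < size P -> pivot P k = Some v ->
  exists m, [/\ m < size P, step_at P m = Leaf & (v, true) \in cl_at P m].
Proof.
move=> kP; rewrite /pivot; have := P_ok kP; rewrite /node_ok.
case: (step_at P k) => // i j z [ik _ _ [zi _] _] [<-].
exact: leaf_with_lit (ltn_trans ik kP) zi.
Qed.

End LeafOrigin.

(** * Proofs of f^x_y(F) *)

Definition sat_xy (x y : nat) (C : clause) : bool := ((x, true) \in C) || ((y, true) \in C).

Definition restr_xy (x y : nat) (C : clause) : clause := C `\` [fset (x, false); (y, false)].

Lemma in_restr_xy x y (C : clause) l :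
  (l \in restr_xy x y C) = (l \notin [fset (x, false); (y, false)]) && (l \in C).
Proof. by rewrite in_fsetD. Qed.

Section Fxy.
Variables (F : cnf) (x y : nat).

Lemma fxyP (C : clause) : C \in fxy x y F ->
  [\/ C = [fset (x, true)], C = [fset (x, false); (y, true)]
    | exists2 d, d \in F & C = (y, false) |` d].
Proof.
rewrite /fxy !in_cons => /or3P [/eqP->|/eqP->|/mapP[d dF ->]];
  [by constructor 1 | by constructor 2 | by constructor 3; exists d].
Qed.

Lemma fxy_xy_apart (C : clause) : x != y -> ~~ mentions F x ->
  C \in fxy x y F -> (x, true) \in C -> (y, true) \notin C.
Proof.
move=> xy mx.
have yx : (y == x) = false by rewrite eq_sym (negbTE xy).
case/fxyP => [->|->|[d dF ->]].
- by rewrite !in_fset1 !xpair_eqE yx.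
- by rewrite in_fset2 !xpair_eqE /= andbF andbT eq_sym yx.
- by rewrite in_fset1U xpair_eqE andbF /= => /(mentionsP dF); rewrite (negbTE mx).
Qed.

Lemma restr_fxy (C : clause) : ~~ mentions F x -> ~~ mentions F y ->
  C \in fxy x y F -> ~~ sat_xy x y C -> restr_xy x y C \in F.
Proof.
move=> mx my.
case/fxyP => [->|->|[d dF ->]]; rewrite /sat_xy ?in_fset1 ?in_fset2 ?eqxx ?orbT // => _.
suff -> : restr_xy x y ((y, false) |` d) = d by [].
apply/fsetP => l; rewrite in_restr_xy in_fset2 in_fset1U.
have [->|_] := eqVneq l (y, false).
  by rewrite orbT /=; apply/esym/negP => /(mentionsP dF); apply/negP.
have [->|_] //= := eqVneq l (x, false).
by apply/esym/negP => /(mentionsP dF); apply/negP.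
Qed.

Variable P : proof.
Hypothesis P_proof : is_proof (fxy x y F) P.

(* Without a resolution on x every clause keeps [x] or a negative literal. *)
Lemma exists_pivot_x : exists2 k, k < size P & pivot P k = Some x.
Proof.
case: P_proof => _ ok root0; have [nox|//] := pivot_onP P x.
suff inv k : k < size P -> (x, true) \in cl_at P k \/ exists v, (v, false) \in cl_at P k.
  case: (inv _ (root_lt_size P_proof)); rewrite root0 ?in_fset0 //.
  by case=> v; rewrite in_fset0.
elim/ltn_ind: k => k IH kP; have := ok k kP; rewrite /node_ok.
case E: (step_at P k) => [|i j z].
  case/fxyP=> [->|->|[d dF ->]]; first by left; rewrite in_fset1.
    by right; exists x; rewrite in_fset2 eqxx.
  by right; exists y; rewrite in_fset1U eqxx.
case=> ik jk _ _ Ck.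
have zx : z != x by have := nox k kP; rewrite /pivot E; apply: contraNneq => ->.
have [xi|[v vi]] := IH i ik (ltn_trans ik kP).
  by left; apply: resolvent_l Ck xi _; rewrite xpair_eqE eq_sym (negbTE zx).
by right; exists v; apply: resolvent_l Ck vi _; rewrite xpair_eqE andbF.
Qed.

(* Without a resolution on y every clause keeps a [y]-literal or is the unit clause [x]. *)
Lemma exists_pivot_y : exists2 k, k < size P & pivot P k = Some y.
Proof.
case: P_proof => _ ok root0; have [noy|//] := pivot_onP P y.
suff inv k : k < size P ->
    [\/ (y, true) \in cl_at P k, (y, false) \in cl_at P k | cl_at P k = [fset (x, true)]].
  case: (inv _ (root_lt_size P_proof)); rewrite root0 ?in_fset0 //.
  by move/fsetP => /(_ (x, true)); rewrite in_fset0 in_fset1 eqxx.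
elim/ltn_ind: k => k IH kP; have := ok k kP; rewrite /node_ok.
case E: (step_at P k) => [|i j z].
  case/fxyP=> [->|->|[d dF ->]]; first by constructor 3.
    by constructor 1; rewrite in_fset2 eqxx orbT.
  by constructor 2; rewrite in_fset1U eqxx.
case=> ik jk _ [zi zj] Ck.
have zy : z != y by have := noy k kP; rewrite /pivot E; apply: contraNneq => ->.
have yz (b b' : bool) : (y, b) != (z, b') by rewrite xpair_eqE eq_sym (negbTE zy).
have [hi|hi|ci] := IH i ik (ltn_trans ik kP).
- by constructor 1; apply: resolvent_l Ck hi (yz _ _).
- by constructor 2; apply: resolvent_l Ck hi (yz _ _).
have [hj|hj|cj] := IH j jk (ltn_trans jk kP).
- by constructor 1; apply: resolvent_r Ck hj (yz _ _).
- by constructor 2; apply: resolvent_r Ck hj (yz _ _).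
by move: zj; rewrite cj in_fset1 xpair_eqE andbF.
Qed.

End Fxy.

(** * Restriction by x := 1, y := 1 *)

Lemma restr_resolvent_l x y (Ck Ci Cj : clause) z l :
  Ck = (Ci `\ (z, true)) `|` (Cj `\ (z, false)) ->
  l \in restr_xy x y Ci -> l != (z, true) -> l \in restr_xy x y Ck.
Proof. by move=> E; rewrite !in_restr_xy => /andP[-> li] lz; apply: resolvent_l E li lz. Qed.

Lemma restr_resolvent_r x y (Ck Ci Cj : clause) z l :
  Ck = (Ci `\ (z, true)) `|` (Cj `\ (z, false)) ->
  l \in restr_xy x y Cj -> l != (z, false) -> l \in restr_xy x y Ck.
Proof. by move=> E; rewrite !in_restr_xy => /andP[-> lj] lz; apply: resolvent_r E lj lz. Qed.

Definition leaf_path_covers (P : proof) (k : nat) (q : seq nat) : Prop :=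
  exists pP, [/\ path (parent P) k pP, is_leaf P (last k pP) &
                 subseq q (path_pivots P (k :: pP))].

Lemma leaf_path_covers_parent P k m q :
  parent P k m -> leaf_path_covers P m q -> leaf_path_covers P k q.
Proof.
move=> km [pP [pm lm sub]]; exists (m :: pP); split => //; first by rewrite /= km.
rewrite path_pivots_cons; case: (pivot P k) => // z.
exact: subseq_trans sub (subseq_cons _ _).
Qed.

Lemma leaf_path_covers_pivot P k m z q : parent P k m -> pivot P k = Some z ->
  leaf_path_covers P m q -> leaf_path_covers P k (z :: q).
Proof.
move=> km kz [pP [pm lm sub]]; exists (m :: pP); split => //; first by rewrite /= km.
by rewrite path_pivots_cons kz /= eqxx.
Qed.

Lemma regular_at_covers P k q : regular_at P k -> leaf_path_covers P k q -> uniq q.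
Proof. by move=> reg [pP [pk lk sub]]; apply: subseq_uniq sub (reg _ pk lk). Qed.

(* [Onto a]: the restricted clause contains the clause of node [a] of the restricted proof;
   [Dropped]: the clause is satisfied by x := y := 1. *)
Inductive fate := Dropped | Onto of nat.

Section Restriction.
Variables (x y : nat) (P : proof).

(* A resolution on [x] or [y] follows
   its right parent, the one whose restriction is not satisfied; a resolution whose
   surviving parent already lacks the pivot literal, or whose parents collapsed onto the
   same node, follows that parent.  The bound tests
   never fail on a proof; they make the step depend only on the prefix computed so far. *)
Definition restrict_step k (C : clause) (s : step) (fate_of : nat -> fate)
    (out : nat -> clause) (n : nat) : fate * option node :=
  match s with
  | Leaf => if sat_xy x y C then (Dropped, None)
            else (Onto n, Some (Node (restr_xy x y C) Leaf))
  | Resolve i j z =>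
    if (i < k) && (j < k) then
      if (z == x) || (z == y) then (fate_of j, None) else
      match fate_of i, fate_of j with
      | Onto a1, Onto a2 =>
        if (a1 < n) && (a2 < n) then
          if a1 == a2 then (Onto a1, None)
          else if (z, true) \notin out a1 then (Onto a1, None)
          else if (z, false) \notin out a2 then (Onto a2, None)
          else (Onto n, Some (Node ((out a1 `\ (z, true)) `|` (out a2 `\ (z, false)))
                                   (Resolve a1 a2 z)))
        else (Dropped, None)
      | _, _ => (Dropped, None)
      end
    else (Dropped, None)
  end.

Lemma restrict_step_ext k C s fate1 fate2 out1 out2 n :
  (forall i, i < k -> fate1 i = fate2 i) -> (forall a, a < n -> out1 a = out2 a) ->
  restrict_step k C s fate1 out1 n = restrict_step k C s fate2 out2 n.
Proof.
move=> Ef Eo; rewrite /restrict_step; case: s => // i j z.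
case: ifP => // /andP[ik jk]; rewrite !Ef //.
case: ifP => // _; case: (fate2 i) => // a1; case: (fate2 j) => // a2.
by case: ifP => // /andP[a1n a2n]; rewrite !Eo.
Qed.

Fixpoint restrict_upto k : seq fate * proof :=
  if k is k'.+1 then
    let p := restrict_upto k' in
    let r := restrict_step k' (cl_at P k') (step_at P k') (nth Dropped p.1)
                           (cl_at p.2) (size p.2) in
    (rcons p.1 r.1, p.2 ++ seq_of_opt r.2)
  else ([::], [::]).

Definition restricted : proof := (restrict_upto (size P)).2.
Definition fate_at k : fate := nth Dropped (restrict_upto (size P)).1 k.
Definition emitted k : nat := size (restrict_upto k).2.
Definition rcl a : clause := cl_at restricted a.
Lemma size_restricted : size restricted = emitted (size P).
Proof. by []. Qed.

Definition rstep k : fate * option node :=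
  restrict_step k (cl_at P k) (step_at P k) fate_at rcl (emitted k).

Lemma size_fates_upto k : size (restrict_upto k).1 = k.
Proof. by elim: k => //= k IH; rewrite size_rcons IH. Qed.

Lemma restrict_upto_prefix k d : exists s1 s2,
  (restrict_upto (k + d)).1 = (restrict_upto k).1 ++ s1 /\
  (restrict_upto (k + d)).2 = (restrict_upto k).2 ++ s2.
Proof.
elim: d => [|d [s1 [s2 [E1 E2]]]]; first by exists [::], [::]; rewrite addn0 !cats0.
rewrite addnS /= E1 E2 rcons_cat -catA.
by eexists; eexists.
Qed.

Lemma emitted_mono k k' : k <= k' -> emitted k <= emitted k'.
Proof.
move/subnKC <-; rewrite /emitted.
have [s1 [s2 [_ ->]]] := restrict_upto_prefix k (k' - k).
by rewrite size_cat leq_addr.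
Qed.

Lemma fate_upto k i : k <= size P -> i < k ->
  nth Dropped (restrict_upto k).1 i = fate_at i.
Proof.
move=> kP ik; rewrite /fate_at -(subnKC kP).
have [s1 [s2 [-> _]]] := restrict_upto_prefix k (size P - k).
by rewrite nth_cat size_fates_upto ik.
Qed.

Lemma nth_restrict_upto k a : k <= size P -> a < emitted k ->
  nth dnode (restrict_upto k).2 a = nth dnode restricted a.
Proof.
move=> kP ak; rewrite /restricted -(subnKC kP).
have [s1 [s2 [_ ->]]] := restrict_upto_prefix k (size P - k).
by rewrite nth_cat ak.
Qed.

Lemma restrict_upto_succ k : k < size P ->
  [/\ fate_at k = (rstep k).1,
      (restrict_upto k.+1).2 = (restrict_upto k).2 ++ seq_of_opt (rstep k).2 &
      emitted k.+1 = emitted k + size (seq_of_opt (rstep k).2)].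
Proof.
move=> kP.
have E : restrict_step k (cl_at P k) (step_at P k) (nth Dropped (restrict_upto k).1)
           (cl_at (restrict_upto k).2) (emitted k) = rstep k.
  apply: restrict_step_ext => [i ik|a ak]; first by apply: fate_upto => //; lia.
  by rewrite /cl_at nth_restrict_upto //; lia.
have E2 : (restrict_upto k.+1).2 = (restrict_upto k).2 ++ seq_of_opt (rstep k).2.
  by rewrite /= E.
split => //; last by rewrite /emitted E2 size_cat.
by rewrite -(@fate_upto k.+1 k kP (ltnSn k)) /= E nth_rcons size_fates_upto ltnn eqxx.
Qed.

Lemma nth_restricted k nd : k < size P -> (rstep k).2 = Some nd ->
  nth dnode restricted (emitted k) = nd.
Proof.
move=> kP E; have [_ E2 Esz] := restrict_upto_succ kP.
rewrite -(@nth_restrict_upto k.+1) //; last by rewrite Esz E /= addn1.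
by rewrite E2 E nth_cat ltnn subnn.
Qed.

Inductive rstep_spec k : fate -> option node -> Prop :=
| LeafSat : step_at P k = Leaf -> sat_xy x y (cl_at P k) -> rstep_spec k Dropped None
| LeafKept : step_at P k = Leaf -> ~~ sat_xy x y (cl_at P k) ->
    rstep_spec k (Onto (emitted k)) (Some (Node (restr_xy x y (cl_at P k)) Leaf))
| BadIndex i j z : step_at P k = Resolve i j z -> ~~ ((i < k) && (j < k)) ->
    rstep_spec k Dropped None
| PivotXY i j z : step_at P k = Resolve i j z -> i < k -> j < k -> (z == x) || (z == y) ->
    rstep_spec k (fate_at j) None
| ParentDropped i j z : step_at P k = Resolve i j z -> i < k -> j < k ->
    ~~ ((z == x) || (z == y)) -> fate_at i = Dropped \/ fate_at j = Dropped ->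
    rstep_spec k Dropped None
| BadFate i j z a1 a2 : step_at P k = Resolve i j z -> i < k -> j < k ->
    fate_at i = Onto a1 -> fate_at j = Onto a2 -> ~~ ((a1 < emitted k) && (a2 < emitted k)) ->
    rstep_spec k Dropped None
| Follow i j z a1 a2 b : step_at P k = Resolve i j z -> i < k -> j < k ->
    ~~ ((z == x) || (z == y)) -> fate_at i = Onto a1 -> fate_at j = Onto a2 ->
    a1 < emitted k -> a2 < emitted k ->
    (b = a1 /\ ((a1 == a2) || ((z, true) \notin rcl a1))) \/
    (b = a2 /\ (z, true) \in rcl a1 /\ (z, false) \notin rcl a2) ->
    rstep_spec k (Onto b) None
| Emit i j z a1 a2 : step_at P k = Resolve i j z -> i < k -> j < k ->
    ~~ ((z == x) || (z == y)) -> fate_at i = Onto a1 -> fate_at j = Onto a2 ->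
    a1 < emitted k -> a2 < emitted k -> a1 != a2 ->
    (z, true) \in rcl a1 -> (z, false) \in rcl a2 ->
    rstep_spec k (Onto (emitted k))
      (Some (Node ((rcl a1 `\ (z, true)) `|` (rcl a2 `\ (z, false))) (Resolve a1 a2 z))).

Lemma rstepP k : k < size P -> rstep_spec k (fate_at k) (rstep k).2.
Proof.
move=> kP; have [-> _ _] := restrict_upto_succ kP.
rewrite /rstep /restrict_step; case E: (step_at P k) => [|i j z].
  by case: ifP => h; [apply: LeafSat | apply: LeafKept => //; rewrite h].
case: ifP => [/andP[ik jk]|g]; last by apply: (BadIndex E); rewrite g.
case: ifP => zxy; first exact: PivotXY E ik jk zxy.
have nzxy : ~~ ((z == x) || (z == y)) by rewrite zxy.
case Fi: (fate_at i) => [|a1]; first by apply: (ParentDropped E) => //; left.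
case Fj: (fate_at j) => [|a2]; first by apply: (ParentDropped E) => //; right.
case: ifP => [/andP[a1n a2n]|g]; last by apply: (BadFate E ik jk Fi Fj); rewrite g.
have follow := Follow E ik jk nzxy Fi Fj a1n a2n.
case: ifP => e12; first by apply: follow; left; rewrite e12.
case: ifP => h1; first by apply: follow; left; rewrite h1 orbT.
case: ifP => h2; first by apply: follow; right; rewrite h2 (negbFE h1).
by apply: (Emit E) => //; rewrite ?e12 ?(negbFE h1) ?(negbFE h2).
Qed.

Lemma fate_onto_bound k a : k < size P -> fate_at k = Onto a -> a < emitted k.+1.
Proof.
elim/ltn_ind: k a => k IH a kP; have [_ _ ->] := restrict_upto_succ kP.
case: (rstepP kP) => //=.
- by move=> _ _ [<-]; rewrite addn1.
- move=> i j z _ _ jk _ /(IH j jk a (ltn_trans jk kP)) aj.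
  by rewrite addn0; apply: leq_trans aj (emitted_mono jk).
- by move=> i j z a1 a2 b _ _ _ _ _ _ a1k a2k [[-> _]|[-> _]] [<-]; rewrite addn0.
- by move=> i j z a1 a2 _ _ _ _ _ _ _ _ _ _ _ [<-]; rewrite addn1.
Qed.

Lemma emitted_at a : a < size restricted ->
  exists k nd, [/\ k < size P, a = emitted k & (rstep k).2 = Some nd].
Proof.
suff H k : k <= size P -> a < emitted k ->
    exists k' nd, [/\ k' < k, a = emitted k' & (rstep k').2 = Some nd].
  by move/(H _ (leqnn _)) => [k [nd [kP -> E]]]; exists k, nd.
elim: k => [|k IH] kP; first by rewrite /emitted.
have [_ _ ->] := restrict_upto_succ kP.
have [ak _|ka] := ltnP a (emitted k).
  have [k' [nd [k'k -> E]]] := IH (ltnW kP) ak.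
  by exists k', nd; rewrite ltnS ltnW.
case E: (rstep k).2 => [nd|] /=; last by rewrite addn0 ltnNge ka.
by rewrite addn1 ltnS => ak; exists k, nd; split => //; apply/eqP; rewrite eqn_leq ak ka.
Qed.

Lemma restricted_avoids : avoids_pivots restricted [:: x; y].
Proof.
move=> a i j z; rewrite /step_at.
have [/emitted_at [k [nd [kP -> E]]]|aR] := ltnP a (size restricted); last first.
  by rewrite nth_default.
rewrite (nth_restricted kP E); move: E; case: (rstepP kP) => // [_ _ [<-] //|].
by move=> i' j' z' a1 a2 _ _ _ zxy _ _ _ _ _ _ _ [<-] [_ _ <-]; rewrite !inE.
Qed.

Lemma restricted_path_lifts k a p : k < size P -> fate_at k = Onto a ->
  path (parent restricted) a p -> is_leaf restricted (last a p) ->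
  leaf_path_covers P k (path_pivots restricted (a :: p)).
Proof.
elim/ltn_ind: k a p => k IH a p kP.
have new nd : (rstep k).2 = Some nd -> nth dnode restricted (emitted k) = nd.
  exact: nth_restricted.
have parent_ij i j z : step_at P k = Resolve i j z -> parent P k i /\ parent P k j.
  by rewrite /parent => ->; rewrite !eqxx orbT.
move: new; case: (rstepP kP) => //.
- move=> E _ /(_ _ erefl) new [<-]; case: p => [_ _|b p]; last first.
    by rewrite /= /parent /step_at new.
  exists [::]; split => //; first by rewrite /is_leaf E.
  by rewrite /path_pivots /= /pivot /step_at new sub0seq.
- move=> i j z E _ jk _ _ Fj pa la.
  apply: leaf_path_covers_parent (proj2 (parent_ij _ _ _ E)) _.
  exact: IH jk a p (ltn_trans jk kP) Fj pa la.
- move=> i j z a1 a2 b E ik jk _ Fi Fj _ _ [[-> _]|[-> _]] _ [<-] pa la.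
    apply: leaf_path_covers_parent (proj1 (parent_ij _ _ _ E)) _.
    exact: IH ik a1 p (ltn_trans ik kP) Fi pa la.
  apply: leaf_path_covers_parent (proj2 (parent_ij _ _ _ E)) _.
  exact: IH jk a2 p (ltn_trans jk kP) Fj pa la.
- move=> i j z a1 a2 E ik jk _ Fi Fj _ _ _ _ _ /(_ _ erefl) new [<-].
  have kz : pivot P k = Some z by rewrite /pivot E.
  case: p => [|b p]; first by rewrite /is_leaf /step_at new.
  rewrite path_pivots_cons {1}/pivot /step_at new /=.
  rewrite {1}/parent /step_at new => /andP[/orP[/eqP->|/eqP->] pa] la.
    apply: leaf_path_covers_pivot (proj1 (parent_ij _ _ _ E)) kz _.
    exact: IH ik a1 p (ltn_trans ik kP) Fi pa la.
  apply: leaf_path_covers_pivot (proj2 (parent_ij _ _ _ E)) kz _.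
  exact: IH jk a2 p (ltn_trans jk kP) Fj pa la.
Qed.

Lemma regular_at_restricted k a : k < size P -> regular_at P k -> fate_at k = Onto a ->
  regular_at restricted a.
Proof.
move=> kP reg Fk p pa la; apply: regular_at_covers reg _.
exact: restricted_path_lifts kP Fk pa la.
Qed.

Definition vanishes k : bool :=
  [|| pivot P k == Some x, pivot P k == Some y | is_leaf P k && sat_xy x y (cl_at P k)].

Lemma vanishes_silent k : k < size P -> vanishes k -> (rstep k).2 = None.
Proof.
move=> kP; rewrite /vanishes; case: (rstepP kP) => //.
- by move=> E ns; rewrite /pivot /is_leaf E (negbTE ns).
- move=> i j z a1 a2 E _ _ zxy _ _ _ _ _ _ _; rewrite /pivot /is_leaf E /= orbF.
  by case/orP=> /eqP[ez]; move: zxy; rewrite ez eqxx ?orbT.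
Qed.

Lemma emitted_count k : k <= size P -> emitted k + count vanishes (iota 0 k) <= k.
Proof.
elim: k => [|k IH] kP; first by rewrite /emitted.
have [_ _ ->] := restrict_upto_succ kP.
rewrite -addn1 iotaD count_cat /= add0n addn0.
have := IH (ltnW kP); case V: (vanishes k).
  by rewrite (vanishes_silent kP V) /=; lia.
by case: (rstep k).2 => [nd|] /=; lia.
Qed.

Variable F : cnf.
Hypothesis P_ok : nodes_ok (fxy x y F) P.

Lemma fate_dropped_sat k : k < size P -> fate_at k = Dropped -> sat_xy x y (cl_at P k).
Proof.
rewrite /sat_xy; elim/ltn_ind: k => k IH kP; have := P_ok kP; rewrite /node_ok.
have pos_xy_neq z :
    ~~ ((z == x) || (z == y)) -> ((x, true) != (z, true)) && ((y, true) != (z, true)).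
  by move=> zxy; rewrite !xpair_eqE !andbT; apply/andP; split;
    apply: contra zxy => /eqP->; rewrite eqxx ?orbT.
case: (rstepP kP) => //.
- by move=> i j z -> bad [ik jk _ _ _]; rewrite ik jk in bad.
- move=> i j z -> ik jk _ [_ _ _ _ Ck] /(IH j jk (ltn_trans jk kP)) /orP[] h;
    apply/orP; [left|right]; by apply: resolvent_r Ck h _; rewrite xpair_eqE andbF.
- move=> i j z -> ik jk /pos_xy_neq /andP[xz yz] Fij [_ _ _ _ Ck] _; case: Fij.
    by move/(IH i ik (ltn_trans ik kP)) => /orP[] h; apply/orP; [left|right];
      apply: resolvent_l Ck h _.
  by move/(IH j jk (ltn_trans jk kP)) => /orP[] h; apply/orP; [left|right];
    apply: resolvent_r Ck h _; rewrite xpair_eqE andbF.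
- move=> i j z a1 a2 _ ik jk Fi Fj.
  by rewrite (leq_trans (fate_onto_bound (ltn_trans ik kP) Fi) (emitted_mono ik))
             (leq_trans (fate_onto_bound (ltn_trans jk kP) Fj) (emitted_mono jk)).
Qed.

Lemma fate_onto_sub k a : k < size P -> fate_at k = Onto a ->
  {subset rcl a <= restr_xy x y (cl_at P k)}.
Proof.
elim/ltn_ind: k a => k IH a kP; have := P_ok kP; rewrite /node_ok.
have rcl_new nd : (rstep k).2 = Some nd -> rcl (emitted k) = ncl nd.
  by move/(nth_restricted kP); rewrite /rcl /cl_at => ->.
move: rcl_new; case: (rstepP kP) => //.
- by move=> _ _ /(_ _ erefl) new _ [<-] l; rewrite new.
- move=> i j z -> ik jk zxy _ [_ _ _ _ Ck] /(IH j jk a (ltn_trans jk kP)) sub l /sub lj.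
  apply: (restr_resolvent_r Ck lj); move: lj; rewrite in_restr_xy; apply: contraTneq => ->.
  by case/orP: zxy => /eqP->; rewrite in_fset2 eqxx ?orbT.
- move=> i j z a1 a2 b -> ik jk _ Fi Fj _ _ hb _ [_ _ _ _ Ck] [<-].
  have sub1 := IH i ik a1 (ltn_trans ik kP) Fi.
  have sub2 := IH j jk a2 (ltn_trans jk kP) Fj.
  case: hb => [[-> /orP[/eqP e12|z1]]|[-> [_ z2]]] l la.
  + have [lz|lz] := eqVneq l (z, true); last exact: restr_resolvent_l Ck (sub1 _ la) lz.
    rewrite e12 in la; apply: (restr_resolvent_r Ck (sub2 _ la)).
    by rewrite lz xpair_eqE andbF.
  + by apply: restr_resolvent_l Ck (sub1 _ la) _; apply: contraNneq z1 => <-.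
  + by apply: restr_resolvent_r Ck (sub2 _ la) _; apply: contraNneq z2 => <-.
- move=> i j z a1 a2 -> ik jk _ Fi Fj _ _ _ _ _ /(_ _ erefl) /= new [_ _ _ _ Ck] [<-] l.
  have sub1 := IH i ik a1 (ltn_trans ik kP) Fi.
  have sub2 := IH j jk a2 (ltn_trans jk kP) Fj.
  rewrite new in_fsetU !in_fsetD1 => /orP[/andP[lz /sub1 li]|/andP[lz /sub2 lj]].
  + exact: restr_resolvent_l Ck li lz.
  + exact: restr_resolvent_r Ck lj lz.
Qed.

Hypotheses (mx : ~~ mentions F x) (my : ~~ mentions F y).

Lemma restricted_ok : nodes_ok F restricted.
Proof.
move=> a /emitted_at [k [nd [kP -> E]]].
rewrite /node_ok /step_at /cl_at (nth_restricted kP E).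
move: E; case: (rstepP kP) => //.
- move=> E nsat [<-] /=.
  by apply: restr_fxy => //; have := P_ok kP; rewrite /node_ok E.
- by move=> i j z a1 a2 _ _ _ _ _ _ a1n a2n n12 h1 h2 [<-].
Qed.

End Restriction.

Section Prefix.
Variables (G : cnf) (Q : proof) (m : nat).
Hypotheses (Q_ok : nodes_ok G Q) (mQ : m < size Q).

Lemma take_nodes_ok : nodes_ok G (take m.+1 Q).
Proof.
move=> b; rewrite size_takel // => bm.
have := Q_ok (leq_trans bm mQ); rewrite /node_ok /step_at /cl_at (nth_take _ bm).
case: (nstep _) => // i j z [ik jk ij zz Ck].
have im : i < m.+1 by apply: ltn_trans ik bm.
have jm : j < m.+1 by apply: ltn_trans jk bm.
by rewrite (nth_take _ im) (nth_take _ jm).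
Qed.

Lemma take_path s p : s <= m -> path (parent (take m.+1 Q)) s p ->
  path (parent Q) s p && all (leq^~ m) p.
Proof.
elim: p s => [|b p IH] s sm //= /andP[sb pb].
have e : parent (take m.+1 Q) s b = parent Q s b by rewrite /parent /step_at nth_take.
rewrite e in sb *; rewrite sb /=.
have bs : b < s.
  move: sb (Q_ok (leq_ltn_trans sm mQ)); rewrite /parent /node_ok.
  by case: (step_at Q s) => // i j z /orP[] /eqP-> [].
have bm : b <= m := ltnW (leq_trans bs sm).
by rewrite bm; apply: IH.
Qed.

Lemma take_path_pivots p : all (leq^~ m) p -> path_pivots (take m.+1 Q) p = path_pivots Q p.
Proof.
elim: p => // b p IH /andP[bm pm].
by rewrite !path_pivots_cons /pivot /step_at nth_take ?ltnS // IH.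
Qed.

Lemma take_reg_proof : cl_at Q m = fset0 -> regular_at Q m -> is_reg_proof G (take m.+1 Q).
Proof.
move=> m0 reg.
have rT : Defs.root (take m.+1 Q) = m by rewrite /Defs.root size_takel.
split; first split.
- by rewrite size_takel.
- exact: take_nodes_ok.
- by rewrite rT /cl_at nth_take.
move=> p; rewrite rT => /(take_path (leqnn m)) /andP[pQ pm] lp.
have lm : last m p <= m.
  by have := mem_last m p; rewrite inE => /orP[/eqP->//|/(allP pm)].
rewrite take_path_pivots /= ?leqnn ?pm //.
by apply: reg pQ _; move: lp; rewrite /is_leaf /step_at nth_take.
Qed.

End Prefix.

Lemma avoids_pivots_take Q n vs : avoids_pivots Q vs -> avoids_pivots (take n Q) vs.
Proof.
move=> av k i j z; rewrite /step_at.
have [kn|nk] := ltnP k n; first by rewrite nth_take //; apply: av.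
by rewrite nth_default // size_take_min geq_min nk.
Qed.

Lemma restriction_exists F x y P : ~~ mentions F x -> ~~ mentions F y ->
  is_reg_proof (fxy x y F) P ->
  exists R, [/\ is_reg_proof F R, avoids_pivots R [:: x; y] &
                size R + count (vanishes x y P) (iota 0 (size P)) <= size P].
Proof.
move=> mx my [Pproof reg]; have [_ P_ok root0] := Pproof.
have rP := root_lt_size Pproof.
case Fr: (fate_at x y P (Defs.root P)) => [|m].
  by have := fate_dropped_sat P_ok rP Fr; rewrite root0 /sat_xy !in_fset0.
have mR : m < size (restricted x y P).
  exact: leq_trans (fate_onto_bound rP Fr) (emitted_mono x y P rP).
have m0 : cl_at (restricted x y P) m = fset0.
  apply/fsetP => l; rewrite in_fset0; apply/negP => /(fate_onto_sub P_ok rP Fr).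
  by rewrite in_restr_xy root0 in_fset0 andbF.
exists (take m.+1 (restricted x y P)); split.
- exact: take_reg_proof (restricted_ok P_ok mx my) mR m0 (regular_at_restricted rP reg Fr).
- by apply: avoids_pivots_take; apply: restricted_avoids.
- have := @emitted_count x y P _ (leqnn (size P)).
  by rewrite size_takel // -size_restricted; lia.
Qed.

(** * Lifting a proof of F *)

Section Lift.
Variables (x y : nat).

Definition weaken_node (nd : node) : node :=
  Node ((y, false) |` ncl nd)
       (if nstep nd is Resolve i j z then Resolve i.+3 j.+3 z else Leaf).

Definition lift_proof (R : proof) : proof :=
  [:: Node [fset (x, true)] Leaf; Node [fset (x, false); (y, true)] Leaf;
      Node [fset (y, true)] (Resolve 0 1 x)]
  ++ map weaken_node R ++ [:: Node fset0 (Resolve 2 (size R).+2 y)].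

Lemma size_lift_proof R : size (lift_proof R) = (size R).+4.
Proof. by rewrite /lift_proof /= size_cat size_map addn1. Qed.

Lemma nth_lift_proof R a : a < size R ->
  nth dnode (lift_proof R) a.+3 = weaken_node (nth dnode R a).
Proof. by move=> aR; rewrite /lift_proof /= nth_cat size_map aR (nth_map dnode). Qed.

Lemma nth_lift_proof_last R :
  nth dnode (lift_proof R) (size R).+3 = Node fset0 (Resolve 2 (size R).+2 y).
Proof. by rewrite /lift_proof /= nth_cat size_map ltnn subnn. Qed.

Lemma nth_lift_proof_y R : nth dnode (lift_proof R) 2 = Node [fset (y, true)] (Resolve 0 1 x).
Proof. by []. Qed.

Lemma pivot_lift_proof R a : a < size R -> pivot (lift_proof R) a.+3 = pivot R a.
Proof. by move=> aR; rewrite /pivot /step_at nth_lift_proof //=; case: (nstep _). Qed.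

Lemma is_leaf_lift_proof R a : a < size R -> is_leaf (lift_proof R) a.+3 = is_leaf R a.
Proof. by move=> aR; rewrite /is_leaf /step_at nth_lift_proof //=; case: (nstep _). Qed.

Lemma weaken_resolvent z (Ca Ci Cj : clause) : z != y ->
  Ca = (Ci `\ (z, true)) `|` (Cj `\ (z, false)) ->
  (y, false) |` Ca =
  (((y, false) |` Ci) `\ (z, true)) `|` (((y, false) |` Cj) `\ (z, false)).
Proof.
move=> zy ->; apply/fsetP => l; rewrite !(in_fset1U, in_fsetU, in_fsetD1).
have [->|] //= := eqVneq l (y, false).
by rewrite !xpair_eqE /= andbF eq_sym (negbTE zy).
Qed.

Variables (F : cnf) (R : proof).
Hypotheses (xy : x != y) (R_ok : nodes_ok F R) (R_avoids : avoids_pivots R [:: x; y]).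

Lemma lift_proof_path p a : a < size R -> path (parent (lift_proof R)) a.+3 p ->
  exists2 pR, p = map (addn 3) pR & path (parent R) a pR && all (gtn (size R)) pR.
Proof.
elim: p a => [|b p IH] a aR; first by exists [::].
have := R_ok aR; rewrite /node_ok /step_at => okA.
case/andP; rewrite {1}/parent /step_at nth_lift_proof //=.
case E: (nstep (nth dnode R a)) okA => // [i j z] [ia ja _ _ _] /orP[] /eqP-> pb.
- have [pR -> /andP[pR1 pR2]] := IH i (ltn_trans ia aR) pb.
  by exists (i :: pR); rewrite //= pR1 pR2 (ltn_trans ia aR) /parent /step_at E eqxx.
- have [pR -> /andP[pR1 pR2]] := IH j (ltn_trans ja aR) pb.
  by exists (j :: pR); rewrite //= pR1 pR2 (ltn_trans ja aR) /parent /step_at E eqxx orbT.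
Qed.

Lemma path_pivots_lift_proof pR : all (gtn (size R)) pR ->
  path_pivots (lift_proof R) (map (addn 3) pR) = path_pivots R pR.
Proof.
elim: pR => // b pR IH /andP[bR pR1].
by rewrite map_cons !path_pivots_cons add3n pivot_lift_proof // IH.
Qed.

Lemma pivot_lift_proof_x k : k < size (lift_proof R) ->
  (pivot (lift_proof R) k == Some x) = (k == 2).
Proof.
rewrite size_lift_proof; case: k => [|[|[|a]]] //= aR.
  by rewrite /pivot /step_at /= eqxx.
have [aR'|Ra] := ltnP a (size R).
  rewrite pivot_lift_proof //; case E: (pivot R a) => [v|] //.
  by apply: contraNF (pivot_avoids R_avoids E) => /eqP[->]; rewrite mem_head.
have -> : a = size R by apply/eqP; rewrite eqn_leq Ra andbT; exact: aR.
rewrite /pivot /step_at nth_lift_proof_last /=.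
by case: eqP => // -[yx]; move: xy; rewrite yx eqxx.
Qed.

Lemma node_ok_lift_proof a : a < size R -> node_ok (fxy x y F) (lift_proof R) a.+3.
Proof.
move=> aR; have := R_ok aR.
rewrite /node_ok /step_at /cl_at nth_lift_proof // /weaken_node.
case E: (nstep (nth dnode R a)) => [|i j z]; cbn [ncl nstep].
  by move=> dF; rewrite /fxy !inE; apply/orP; right; apply/orP; right; apply: map_f.
case=> ia ja ij [zi zj] Ca.
have zy : z != y by move: (R_avoids (E : step_at R a = _)); rewrite !inE negb_or => /andP[].
rewrite !nth_lift_proof ?(ltn_trans ia aR) ?(ltn_trans ja aR) //; cbn [ncl].
split => //; first by rewrite !in_fset1U zi zj !orbT.
exact: weaken_resolvent zy Ca.
Qed.

Hypotheses (R_pos : 0 < size R) (R_root : cl_at R (Defs.root R) = fset0).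

Lemma node_ok_lift_proof_last : node_ok (fxy x y F) (lift_proof R) (size R).+3.
Proof.
have root3 : (Defs.root R).+3 = (size R).+2 by rewrite -(root_succ R_pos).
rewrite /node_ok /step_at /cl_at nth_lift_proof_last; cbn [ncl nstep].
rewrite -root3 nth_lift_proof ?ltn_predL // nth_lift_proof_y; cbn [ncl weaken_node].
rewrite -/(cl_at R _) R_root; split => //.
- by rewrite in_fset1 in_fset1U !eqxx.
apply/fsetP => l; rewrite !(in_fsetU, in_fsetD1, in_fset1, in_fset1U, in_fset0).
by case: (l == (y, true)); case: (l == (y, false)).
Qed.

Lemma lift_proof_nodes_ok : nodes_ok (fxy x y F) (lift_proof R).
Proof.
move=> k; rewrite size_lift_proof; case: k => [|[|[|a]]] aR.
- by rewrite /node_ok /step_at /cl_at /= in_cons eqxx.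
- by rewrite /node_ok /step_at /cl_at /= !in_cons eqxx orbT.
- rewrite /node_ok /step_at /cl_at /=; split => //; first by rewrite in_fset1 in_fset2 !eqxx.
  apply/fsetP => l; rewrite !(in_fsetU, in_fsetD1, in_fset1, in_fset2, in_fset0).
  have [->|ny] := eqVneq l (y, true); first by rewrite !xpair_eqE /= eq_sym (negbTE xy) orbT.
  by case: (l == (x, true)); case: (l == (x, false)).
have [aR'|Ra] := ltnP a (size R); first exact: node_ok_lift_proof.
have -> : a = size R by apply/eqP; rewrite eqn_leq Ra andbT; exact: aR.
exact: node_ok_lift_proof_last.
Qed.

Hypothesis R_reg : regular R.

Lemma lift_proof_regular : regular (lift_proof R).
Proof.
have rQ : Defs.root (lift_proof R) = (size R).+3 by rewrite /Defs.root size_lift_proof.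
have root_y : pivot (lift_proof R) (size R).+3 = Some y.
  by rewrite /pivot /step_at nth_lift_proof_last.
have noy s : y \notin path_pivots R s.
  rewrite /path_pivots mem_pmap; apply/mapP => -[a _ /esym /(pivot_avoids R_avoids)].
  by rewrite !inE eqxx orbT.
move=> p; rewrite rQ; case: p => [|b p].
  by rewrite /is_leaf /step_at nth_lift_proof_last.
rewrite path_pivots_cons root_y cons_uniq => /andP[].
rewrite {1}/parent /step_at nth_lift_proof_last => /orP[] /eqP-> pb lp.
  case: p pb lp => [|c p]; first by rewrite /is_leaf /step_at nth_lift_proof_y.
  case/andP; rewrite {1}/parent /step_at nth_lift_proof_y => /orP[] /eqP-> pc lp;
    case: p pc lp => [|d p] // _ _;
    by rewrite /path_pivots /pivot /step_at /= !inE eq_sym (negbTE xy).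
have rR : Defs.root R < size R by rewrite ltn_predL.
have root3 : (Defs.root R).+3 = (size R).+2 by rewrite -(root_succ R_pos).
rewrite -root3 in pb lp *; move: lp.
have [pR -> /andP[pR1 pR2]] := lift_proof_path rR pb.
have -> : (Defs.root R).+3 :: map (addn 3) pR = map (addn 3) (Defs.root R :: pR) by [].
rewrite path_pivots_lift_proof ?noy /=; last by rewrite rR.
move=> lp; apply: R_reg pR1 _; move: lp.
rewrite last_map add3n is_leaf_lift_proof //.
by have := mem_last (Defs.root R) pR; rewrite inE => /orP[/eqP->|/(allP pR2)].
Qed.

Lemma nres_lift_proof : nres_on (lift_proof R) x = 1.
Proof.
rewrite /nres_on (@eq_in_count _ _ (pred1 2)); last first.
  by move=> k; rewrite mem_iota add0n => /andP[_ kQ]; rewrite /= pivot_lift_proof_x.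
by rewrite count_uniq_mem ?iota_uniq // mem_iota size_lift_proof.
Qed.

Lemma lift_proof_pivot_x_leaves k i j : k < size (lift_proof R) ->
  step_at (lift_proof R) k = Resolve i j x ->
  [/\ step_at (lift_proof R) i = Leaf, cl_at (lift_proof R) i = [fset (x, true)],
      step_at (lift_proof R) j = Leaf & cl_at (lift_proof R) j = [fset (x, false); (y, true)]].
Proof.
move=> kQ E; have := pivot_lift_proof_x kQ; rewrite /pivot E eqxx => /esym/eqP k2.
by move: E; rewrite k2 /step_at nth_lift_proof_y => -[<- <-].
Qed.

Lemma lift_proof_reg_proof : is_reg_proof (fxy x y F) (lift_proof R).
Proof.
split; last exact: lift_proof_regular.
split; [by rewrite size_lift_proof | exact: lift_proof_nodes_ok |].
by rewrite /Defs.root size_lift_proof /cl_at nth_lift_proof_last.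
Qed.

End Lift.

Lemma count_vanishes_split x y P s : x != y ->
  count (fun k => pivot P k == Some x) s + count (fun k => pivot P k == Some y) s
  + count (fun k => is_leaf P k && sat_xy x y (cl_at P k)) s <= count (vanishes x y P) s.
Proof.
move=> xy; elim: s => //= k s IH.
suff le_k : (pivot P k == Some x) + (pivot P k == Some y)
            + (is_leaf P k && sat_xy x y (cl_at P k)) <= vanishes x y P k.
  by rewrite [X in X + _ <= _]addnACA addnACA; apply: leq_add le_k IH.
rewrite /vanishes /is_leaf /pivot; case: (step_at P k) => [|i j z] /=; first by case: sat_xy.
case: eqP => [[zx]|_]; case: eqP => [[zy]|_] //.
by move: xy; rewrite -zx -zy eqxx.
Qed.

Section SatisfiedLeaves.
Variables (F : cnf) (x y : nat) (P : proof).
Hypotheses (xy : x != y) (mx : ~~ mentions F x) (P_proof : is_proof (fxy x y F) P).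

Lemma two_sat_leaves :
  2 <= count (fun k => is_leaf P k && sat_xy x y (cl_at P k)) (iota 0 (size P)).
Proof.
have [_ P_ok _] := P_proof.
have [kx kxP /(leaf_with_pivot P_ok kxP) [lx [lxP lxL lxC]]] := exists_pivot_x P_proof.
have [ky kyP /(leaf_with_pivot P_ok kyP) [ly [lyP lyL lyC]]] := exists_pivot_y P_proof.
have lxy : lx != ly.
  apply: contraTneq lyC => <-; apply: fxy_xy_apart xy mx _ lxC.
  by have := P_ok _ lxP; rewrite /node_ok lxL.
rewrite -size_filter (@uniq_leq_size _ [:: lx; ly]) //= ?inE ?lxy //.
move=> k; rewrite !inE mem_filter mem_iota /= /is_leaf /sat_xy.
by case/orP => /eqP->; rewrite ?lxL ?lyL ?lxC ?lyC ?orbT ?lxP ?lyP.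
Qed.

Lemma count_vanishes :
  nres_on P x + nres_on P y + 2 <= count (vanishes x y P) (iota 0 (size P)).
Proof.
apply: leq_trans (count_vanishes_split _ _ xy); rewrite /nres_on leq_add2l.
exact: two_sat_leaves.
Qed.

End SatisfiedLeaves.

Theorem lemma8 (F : cnf) (x y : nat) :
  x != y -> ~~ mentions F x -> ~~ mentions F y -> unsatisfiable F ->
  forall P : proof, is_min_reg_proof (fxy x y F) P ->
    nres_on P x = 1 /\
    exists Q : proof,
      [/\ is_reg_proof (fxy x y F) Q, size Q = size P, nres_on Q x = 1 &
          forall k i j, k < size Q -> step_at Q k = Resolve i j x ->
            [/\ step_at Q i = Leaf, cl_at Q i = [fset (x, true)],
                step_at Q j = Leaf & cl_at Q j = [fset (x, false); (y, true)]]].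
Proof.
move=> xy mx my _ P [[P_proof P_reg] P_min].
have [R [[[R_pos R_ok R_root] R_reg] R_avoids R_size]] :=
  restriction_exists mx my (conj P_proof P_reg).
have Q_reg := lift_proof_reg_proof xy R_ok R_avoids R_pos R_root R_reg.
have := P_min _ Q_reg; rewrite size_lift_proof => P_le.
have vanish := count_vanishes xy mx P_proof.
have [kx kxP /(nres_on_gt0 kxP) nx] := exists_pivot_x P_proof.
have [ky kyP /(nres_on_gt0 kyP) ny] := exists_pivot_y P_proof.
have nx1 : nres_on P x = 1 by lia.
split=> //; exists (lift_proof x y R); split.
- exact: Q_reg.
- by rewrite size_lift_proof; lia.
- exact: nres_lift_proof.
- exact: lift_proof_pivot_x_leaves.
Qed.
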